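(* There is a constant $c$ such that for every $i\in\mathbb{N}$ there is an MSO formula $\zeta_i(X)$ over the vocabulary $\{Oc,\overline{Oc},Cl,Lt,U,B_\Box,D_\Diamond\}\cup\{Lv_j: j\ge0\}$, with one free set variable and of length at most $c(i+1)$, such that for every modal CNF formula $\phi$ and every set $C$ of domain elements of $\mathcal{S}(\phi)$ representing clauses at level at most $i$: $\mathrm{CNF}(C)$ is satisfiable at some world of some Kripke model with reflexive accessibility relation if and only if $\mathcal{S}(\phi)\models\zeta_i(C)$.
   Context: Modal CNF: literal ::= $q$ | $\neg q$ | $\Box$clause | $\Diamond$CNF; clause ::= literal | clause $\lor$ clause | $\bot$; CNF ::= clause | CNF $\wedge$ CNF, with $\bot$ occurring only inside subformulas $\Box\bot$. Levels: the top-level clauses of $\phi$ and their literals are at level $\mathrm{md}(\phi)$ (modal depth); if $\Box\,\mathrm{clause}_1$ is a literal at level $i$, $\mathrm{clause}_1$ and its literals are at level $i-1$; if $\Diamond(\mathrm{clause}_1\wedge\dots\wedge\mathrm{clause}_{m'})$ is at level $i$, those clauses and their literals are at level $i-1$. $\mathcal{S}(\phi)$: domain has one element per occurrence of a clause, one per occurrence of a literal of the form $\Box$clause or $\Diamond$CNF, and one per propositional variable (no element for $\bot$). $\overline{Oc}(e_1,e_2)$ iff $e_1$ is a clause and $e_2$ a variable occurring negated in it. $Oc(e_1,e_2)$ iff ($e_1$ a clause, $e_2$ a literal of it of the form $\Box$clause, $\Diamond$CNF or a non-negated variable) or ($e_1=\Box$clause, $e_2$ that clause) or ($e_1=\Diamond$CNF,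 $e_2$ a clause of that CNF). Unary relations $Cl$ (clauses), $Lt$ (literals), $U$ ($\Box\bot$ literals), $B_\Box$, $D_\Diamond$ ($\Box$- resp. $\Diamond$-literals), $Lv_j$ (clauses and literals at level $j$). For a set $C$ of clause elements, $\mathrm{CNF}(C)$ is the conjunction of the clauses represented by elements of $C$. *)

From HB Require Import structures.
From mathcomp Require Import all_boot.

Set Implicit Arguments.
Unset Strict Implicit.
Unset Printing Implicit Defensive.

(*   clause  ::= list of literals (disjunction); CNil = bottom          *)
(* Well-formedness (wf_cnf) enforces: a CNF has >= 1 clause, a clause   *)
(* has >= 1 literal, except that the argument of a Box may be bottom    *)
(* (CNil), i.e. bottom only occurs as Box bottom.                       *)
Inductive lit : Type :=
| LPos : nat -> lit
| LNeg : nat -> lit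
| LBox : clause -> lit
| LDia : cnf -> lit
with clause : Type :=
| CNil : clause
| CCons : lit -> clause -> clause
with cnf : Type :=
| FNil : cnf
| FCons : clause -> cnf -> cnf.

Definition clause_nonempty (c : clause) : bool :=
  if c is CNil then false else true.
Definition cnf_nonempty (f : cnf) : bool :=
  if f is FNil then false else true.

Fixpoint wf_lit (l : lit) : bool :=
  match l with
  | LPos _ | LNeg _ => true
  | LBox c => lits_wf c          (* c = CNil (bottom) allowed here only *)
  | LDia f => cnf_nonempty f && clauses_wf f
  end
with lits_wf (c : clause) : bool :=
  match c with
  | CNil => true
  | CCons l c' => wf_lit l && lits_wf c'
  end
with clauses_wf (f : cnf) : bool :=
  match f with
  | FNil => true
  | FCons c f' => [&& clause_nonempty c, lits_wf c & clauses_wf f']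
  end.

Definition wf_cnf (f : cnf) : bool := cnf_nonempty f && clauses_wf f.

Fixpoint md_lit (l : lit) : nat :=
  match l with
  | LPos _ | LNeg _ => 0
  | LBox c => (md_clause c).+1
  | LDia f => (md_cnf f).+1
  end
with md_clause (c : clause) : nat :=
  match c with
  | CNil => 0
  | CCons l c' => maxn (md_lit l) (md_clause c')
  end
with md_cnf (f : cnf) : nat :=
  match f with
  | FNil => 0
  | FCons c f' => maxn (md_clause c) (md_cnf f')
  end.

Section Kripke.
Variables (W : Type) (R : W -> W -> Prop) (V : nat -> W -> Prop).

Fixpoint lit_true (w : W) (l : lit) : Prop :=
  match l with
  | LPos q => V q w
  | LNeg q => ~ V q w
  | LBox c => forall v, R w v -> clause_true v c
  | LDia f => exists v, R w v /\ cnf_true v f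
  end
with clause_true (w : W) (c : clause) : Prop :=
  match c with
  | CNil => False
  | CCons l c' => lit_true w l \/ clause_true w c'
  end
with cnf_true (w : W) (f : cnf) : Prop :=
  match f with
  | FNil => True
  | FCons c f' => clause_true w c /\ cnf_true w f'
  end.
End Kripke.

Definition sat_reflexive (f : cnf) : Prop :=
  exists (W : Type) (R : W -> W -> Prop) (V : nat -> W -> Prop) (w : W),
    (forall x, R x x) /\ cnf_true R V w f.

(* Occurrences are addressed by paths (seq nat):                       *)
(*  - clause k of a CNF: k :: (path inside clause)                      *)
(*  - literal j of a clause: j :: (path inside literal)                 *)
(*  - the clause of Box c: 0 :: (path inside c)                         *)
(*  - the clauses of Dia f: as for a CNF.                               *)
(* Lookup returns the node at a path together with its level.          *)
Inductive node : Type := NClause of clause | NLit of lit.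

Fixpoint lit_at (l : lit) (lv : nat) (p : seq nat) {struct l}
  : option (node * nat) :=
  match p with
  | [::] => Some (NLit l, lv)
  | k :: p' =>
    match l with
    | LBox c => if k is 0 then clause_at c lv.-1 p' else None
    | LDia f => cnf_at f lv.-1 (k :: p')
    | _ => None
    end
  end
with clause_at (c : clause) (lv : nat) (p : seq nat) {struct c}
  : option (node * nat) :=
  match p with
  | [::] => Some (NClause c, lv)
  | j :: p' =>
    match c with
    | CNil => None
    | CCons l c' => if j is j'.+1 then clause_at c' lv (j' :: p')
                    else lit_at l lv p'
    end
  end
with cnf_at (f : cnf) (lv : nat) (p : seq nat) {struct f}
  : option (node * nat) :=
  match p, f with
  | k :: p', FCons c f' => if k is k'.+1 then cnf_at f' lv (k' :: p')
                           else clause_at c lv p'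
  | _, _ => None
  end.

(* top-level clauses are at level md(phi) *)
Definition node_at (phi : cnf) (p : seq nat) := cnf_at phi (md_cnf phi) p.

Definition shift (p : seq nat) : seq nat :=
  if p is k :: p' then k.+1 :: p' else [::].

Fixpoint lit_paths (l : lit) : seq (seq nat) :=
  [::] :: match l with
          | LBox c => [seq 0 :: p | p <- [::] :: clause_subpaths c]
          | LDia f => cnf_paths f
          | _ => [::]
          end
with clause_subpaths (c : clause) : seq (seq nat) :=
  match c with
  | CNil => [::]
  | CCons l c' => [seq 0 :: p | p <- lit_paths l]
                    ++ [seq shift p | p <- clause_subpaths c']
  end
with cnf_paths (f : cnf) : seq (seq nat) :=
  match f with
  | FNil => [::]
  | FCons c f' => [seq 0 :: p | p <- [::] :: clause_subpaths c]
                    ++ [seq shift p | p <- cnf_paths f']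
  end.

Fixpoint lit_vars (l : lit) : seq nat :=
  match l with
  | LPos q | LNeg q => [:: q]
  | LBox c => clause_vars c
  | LDia f => cnf_vars f
  end
with clause_vars (c : clause) : seq nat :=
  match c with
  | CNil => [::]
  | CCons l c' => lit_vars l ++ clause_vars c'
  end
with cnf_vars (f : cnf) : seq nat :=
  match f with
  | FNil => [::]
  | FCons c f' => clause_vars c ++ cnf_vars f'
  end.

Fixpoint clause_has_pos (c : clause) (q : nat) : bool :=
  match c with
  | CNil => false
  | CCons l c' => (if l is LPos q' then q' == q else false) || clause_has_pos c' q
  end.

Fixpoint clause_has_neg (c : clause) (q : nat) : bool :=
  match c with
  | CNil => false
  | CCons l c' => (if l is LNeg q' then q' == q else false) || clause_has_neg c' q
  end.

(* Elements: inl p  (occurrence at path p of a clause other than bottom,*)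
(*           or of a literal Box clause / Dia CNF),                    *)
(*           inr q  (propositional variable q occurring in phi).       *)
Definition elem : Type := (seq nat + nat)%type.

Definition is_elem_node (o : option (node * nat)) : bool :=
  match o with
  | Some (NClause CNil, _) => false
  | Some (NClause _, _) => true
  | Some (NLit (LBox _), _) => true
  | Some (NLit (LDia _), _) => true
  | _ => false
  end.

Definition S_list (phi : cnf) : seq elem :=
  [seq (inl p : elem) | p <- cnf_paths phi & is_elem_node (node_at phi p)]
  ++ [seq (inr q : elem) | q <- undup (cnf_vars phi)].

Definition node_of (phi : cnf) (e : elem) : option (node * nat) :=
  match e with inl p => node_at phi p | inr _ => None end.

Definition isCl phi e : bool :=
  if node_of phi e is Some (NClause _, _) then true else false.
Definition isB phi e : bool :=
  if node_of phi e is Some (NLit (LBox _), _) then true else false.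
Definition isD phi e : bool :=
  if node_of phi e is Some (NLit (LDia _), _) then true else false.
Definition isLt phi e : bool := isB phi e || isD phi e.
Definition isU phi e : bool :=
  if node_of phi e is Some (NLit (LBox CNil), _) then true else false.
Definition isLv phi (j : nat) e : bool :=
  if node_of phi e is Some (_, lv) then lv == j else false.

Definition child (p p' : seq nat) : bool :=
  (size p' == (size p).+1) && (take (size p) p' == p).

Definition isOc phi (e1 e2 : elem) : bool :=
  match e1, e2 with
  | inl p, inl p' =>
      child p p' &&
      [|| isCl phi e1 && isLt phi e2,
          isB phi e1 && isCl phi e2
        | isD phi e1 && isCl phi e2 ]
  | inl p, inr q =>
      if node_at phi p is Some (NClause c, _) then clause_has_pos c q else false
  | _, _ => false
  end.

Definition isOcb phi (e1 e2 : elem) : bool :=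
  match e1, e2 with
  | inl p, inr q =>
      if node_at phi p is Some (NClause c, _) then clause_has_neg c q else false
  | _, _ => false
  end.

Record rstruct := RStruct {
  rdom : finType;
  rOc : rel rdom;
  rOcb : rel rdom;
  rCl : pred rdom;
  rLt : pred rdom;
  rU : pred rdom;
  rB : pred rdom;
  rD : pred rdom;
  rLv : nat -> pred rdom
}.

Definition Sdom (phi : cnf) : finType := seq_sub (S_list phi).

Definition Sstruct (phi : cnf) : rstruct :=
  @RStruct (Sdom phi)
    (fun x y => isOc phi (val x) (val y))
    (fun x y => isOcb phi (val x) (val y))
    (fun x => isCl phi (val x))
    (fun x => isLt phi (val x))
    (fun x => isU phi (val x))
    (fun x => isB phi (val x))
    (fun x => isD phi (val x))
    (fun j x => isLv phi j (val x)).

Definition clause_of (phi : cnf) (e : elem) : clause :=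
  if node_of phi e is Some (NClause c, _) then c else CNil.

Definition CNF_of (phi : cnf) (C : {set Sdom phi}) : cnf :=
  foldr FCons FNil [seq clause_of phi (val e) | e <- enum C].

(* named by natural numbers (separate namespaces).                     *)
Inductive mso : Type :=
| MOc : nat -> nat -> mso
| MOcb : nat -> nat -> mso
| MCl : nat -> mso
| MLt : nat -> mso
| MU : nat -> mso
| MB : nat -> mso
| MD : nat -> mso
| MLv : nat -> nat -> mso          (* MLv j x  :  Lv_j(x) *)
| MEq : nat -> nat -> mso
| MIn : nat -> nat -> mso          (* MIn x X  :  x \in X *)
| MNot : mso -> mso
| MAnd : mso -> mso -> mso
| MOr : mso -> mso -> mso
| MEx1 : nat -> mso -> mso
| MAll1 : nat -> mso -> mso
| MEx2 : nat -> mso -> mso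
| MAll2 : nat -> mso -> mso.

(* length = number of symbols (each atom counts as one symbol) *)
Fixpoint mso_len (f : mso) : nat :=
  match f with
  | MNot g | MEx1 _ g | MAll1 _ g | MEx2 _ g | MAll2 _ g => (mso_len g).+1
  | MAnd g h | MOr g h => (mso_len g + mso_len h).+1
  | _ => 1
  end.

Fixpoint fv1 (f : mso) : seq nat :=
  match f with
  | MOc x y | MOcb x y | MEq x y => [:: x; y]
  | MCl x | MLt x | MU x | MB x | MD x | MLv _ x | MIn x _ => [:: x]
  | MNot g | MEx2 _ g | MAll2 _ g => fv1 g
  | MAnd g h | MOr g h => fv1 g ++ fv1 h
  | MEx1 x g | MAll1 x g => [seq y <- fv1 g | y != x]
  end.

Fixpoint fv2 (f : mso) : seq nat :=
  match f with
  | MIn _ X => [:: X]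
  | MNot g | MEx1 _ g | MAll1 _ g => fv2 g
  | MAnd g h | MOr g h => fv2 g ++ fv2 h
  | MEx2 X g | MAll2 X g => [seq Y <- fv2 g | Y != X]
  | _ => [::]
  end.

Definition upd {T : Type} (e : nat -> T) (n : nat) (v : T) : nat -> T :=
  fun m => if m == n then v else e m.

Section MSOsem.
Variable A : rstruct.

Definition at1 (e1 : nat -> option (rdom A)) (P : pred (rdom A)) x : Prop :=
  if e1 x is Some a then P a else False.
Definition at2 (e1 : nat -> option (rdom A)) (Q : rel (rdom A)) x y : Prop :=
  match e1 x, e1 y with Some a, Some b => Q a b | _, _ => False end.

Fixpoint mso_eval (e1 : nat -> option (rdom A)) (e2 : nat -> {set rdom A})
    (f : mso) : Prop :=
  match f with
  | MOc x y => at2 e1 (@rOc A) x y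
  | MOcb x y => at2 e1 (@rOcb A) x y
  | MCl x => at1 e1 (@rCl A) x
  | MLt x => at1 e1 (@rLt A) x
  | MU x => at1 e1 (@rU A) x
  | MB x => at1 e1 (@rB A) x
  | MD x => at1 e1 (@rD A) x
  | MLv j x => at1 e1 (@rLv A j) x
  | MEq x y => at2 e1 (fun a b => a == b) x y
  | MIn x X => at1 e1 (fun a => a \in e2 X) x
  | MNot g => ~ mso_eval e1 e2 g
  | MAnd g h => mso_eval e1 e2 g /\ mso_eval e1 e2 h
  | MOr g h => mso_eval e1 e2 g \/ mso_eval e1 e2 h
  | MEx1 x g => exists a : rdom A, mso_eval (upd e1 x (Some a)) e2 g
  | MAll1 x g => forall a : rdom A, mso_eval (upd e1 x (Some a)) e2 g
  | MEx2 X g => exists Y : {set rdom A}, mso_eval e1 (upd e2 X Y) g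
  | MAll2 X g => forall Y : {set rdom A}, mso_eval e1 (upd e2 X Y) g
  end.

(* A |= zeta(C), for zeta whose only free variable is the set variable 0 *)
Definition models1 (zeta : mso) (C : {set rdom A}) : Prop :=
  mso_eval (fun _ => None) (fun n => if n == 0 then C else set0) zeta.
End MSOsem.

(* zeta has exactly one (possibly vacuous) free variable: set variable 0 *)
Definition one_free_setvar (zeta : mso) : Prop :=
  fv1 zeta = [::] /\ {subset fv2 zeta <= [:: 0]}.

From HB Require Import structures.
From mathcomp Require Import all_boot.
From Stdlib Require Import Classical ClassicalEpsilon.

Set Implicit Arguments.
Unset Strict Implicit.
Unset Printing Implicit Defensive.

(* The formula zeta_i(X) guesses a set D of clause occurrences containing X and
   a set T of elements meant to be true at the current world, and checks that
   the guess is locally consistent: each clause of D has a child in T or a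
   negated variable outside T; the clause of each Box literal of T below D is in
   D (this is where reflexivity enters); and for each Diamond literal y of T
   below D, the clauses of y together with the clauses of the Box literals of T
   below D satisfy zeta_(i-1) (for i = 0 there may be no such y).  Soundness
   takes for D and T the truth sets of a reflexive model.  For completeness, the
   models obtained for the Diamond literals are glued below a fresh reflexive
   root whose valuation is read off T; every clause of D then holds at the root,
   by induction on its modal depth.  Each level of the recursion adds a fixed
   number of symbols, whence the linear length bound. *)

Scheme lit_ind' := Induction for lit Sort Prop
with clause_ind' := Induction for clause Sort Prop
with cnf_ind' := Induction for cnf Sort Prop.
Combined Scheme formula_ind from lit_ind', clause_ind', cnf_ind'.

Definition node_lookup (n : node) (lv : nat) (p : seq nat) :=
  match n with NClause c => clause_at c lv p | NLit l => lit_at l lv p end.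

Definition lookup_from (o : option (node * nat)) (p : seq nat) :=
  if o is Some (n, lv) then node_lookup n lv p else None.

Lemma lookup_cat :
  (forall l lv p q, lit_at l lv (p ++ q) = lookup_from (lit_at l lv p) q) /\
  (forall c lv p q, clause_at c lv (p ++ q) = lookup_from (clause_at c lv p) q) /\
  (* a CNF is not itself a node: [cnf_at f lv [::] = None] *)
  (forall f lv p q, p != [::] -> cnf_at f lv (p ++ q) = lookup_from (cnf_at f lv p) q).
Proof.
apply: formula_ind.
- by move=> n lv [|k p] q.
- by move=> n lv [|k p] q.
- by move=> c IH lv [|[|k] p] q //=; apply: IH.
- by move=> f IH lv [|k p] q //=; apply: (IH _ (k :: p)).
- by move=> lv [|k p] q.
- by move=> l IHl c IHc lv [|[|j] p] q //=; apply: (IHc lv (j :: p)).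
- by move=> lv [|k p] q.
- by move=> c IHc f IHf lv [|[|k] p] q //= _; apply: (IHf lv (k :: p)).
Qed.

Lemma lookup_paths :
  (forall l lv p, lit_at l lv p -> p \in lit_paths l) /\
  (forall c lv p, clause_at c lv p -> p \in [::] :: clause_subpaths c) /\
  (forall f lv p, cnf_at f lv p -> p \in cnf_paths f).
Proof.
apply: formula_ind.
- by move=> n lv [|k p].
- by move=> n lv [|k p].
- move=> c IH lv [|[|k] p] //= H.
  by rewrite inE (map_f (cons 0) (IH _ _ H)) orbT.
- by move=> f IH lv [|k p] //= H; rewrite inE (IH _ _ H) orbT.
- by move=> lv [|k p].
- move=> l IHl c IHc lv [|[|j] p] //= H; rewrite inE mem_cat.
  + by rewrite (map_f (cons 0) (IHl _ _ H)) orbT.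
  + by move: (IHc lv (j :: p) H); rewrite inE /= => /(map_f shift) ->; rewrite !orbT.
- by move=> lv [|k p].
- move=> c IHc f IHf lv [|[|k] p] //= H; rewrite -cat_cons mem_cat.
  + by rewrite (map_f (cons 0) (IHc _ _ H)).
  + by rewrite (map_f shift (IHf lv (k :: p) H)) orbT.
Qed.

Definition node_vars n :=
  match n with NClause c => clause_vars c | NLit l => lit_vars l end.
Definition node_wf n :=
  match n with NClause c => lits_wf c | NLit l => wf_lit l end.
Definition node_md n :=
  match n with NClause c => md_clause c | NLit l => md_lit l end.

Lemma lookup_vars :
  (forall l lv p n lv', lit_at l lv p = Some (n, lv') ->
     {subset node_vars n <= lit_vars l}) /\
  (forall c lv p n lv', clause_at c lv p = Some (n, lv') ->
     {subset node_vars n <= clause_vars c}) /\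
  (forall f lv p n lv', cnf_at f lv p = Some (n, lv') ->
     {subset node_vars n <= cnf_vars f}).
Proof.
apply: formula_ind.
- by move=> q lv [|k p] //= n lv' [<- _].
- by move=> q lv [|k p] //= n lv' [<- _].
- by move=> c IH lv [|[|k] p] //= n lv'; [case=> <- _ | apply: IH].
- by move=> f IH lv [|k p] //= n lv'; [case=> <- _ | apply: IH].
- by move=> lv [|k p] //= n lv' [<- _].
- move=> l IHl c IHc lv [|[|j] p] //= n lv'; first by case=> <- _.
  + by move=> /IHl H x /H; rewrite mem_cat => ->.
  + by move=> /IHc H x /H; rewrite mem_cat => ->; rewrite orbT.
- by move=> lv [|k p].
- move=> c IHc f IHf lv [|[|k] p] //= n lv'.
  + by move=> /IHc H x /H; rewrite mem_cat => ->.
  + by move=> /IHf H x /H; rewrite mem_cat => ->; rewrite orbT.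
Qed.

Lemma lookup_wf :
  (forall l lv p n lv', wf_lit l -> lit_at l lv p = Some (n, lv') -> node_wf n) /\
  (forall c lv p n lv', lits_wf c -> clause_at c lv p = Some (n, lv') -> node_wf n) /\
  (forall f lv p n lv', clauses_wf f -> cnf_at f lv p = Some (n, lv') -> node_wf n).
Proof.
apply: formula_ind.
- by move=> q lv [|k p] //= n lv' _ [<- _].
- by move=> q lv [|k p] //= n lv' _ [<- _].
- move=> c IH lv [|[|k] p] //= n lv' W; first by case=> <- _.
  exact: IH.
- move=> f IH lv [|k p] //= n lv' W; first by case=> <- _.
  by case/andP: W => _; apply: IH.
- by move=> lv [|k p] //= n lv' _ [<- _].
- move=> l IHl c IHc lv [|[|j] p] //= n lv' /andP [Wl Wc].
  + by case=> <- _; rewrite /= Wl.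
  + exact: IHl.
  + exact: IHc.
- by move=> lv [|k p].
- move=> c IHc f IHf lv [|[|k] p] //= n lv' /and3P [_ Wc Wf].
  + exact: IHc.
  + exact: IHf.
Qed.

Lemma lookup_md :
  (forall l lv p n lv', md_lit l <= lv -> lit_at l lv p = Some (n, lv') ->
     node_md n <= lv') /\
  (forall c lv p n lv', md_clause c <= lv -> clause_at c lv p = Some (n, lv') ->
     node_md n <= lv') /\
  (forall f lv p n lv', md_cnf f <= lv -> cnf_at f lv p = Some (n, lv') ->
     node_md n <= lv').
Proof.
apply: formula_ind.
- by move=> q lv [|k p] //= n lv' W [<- <-].
- by move=> q lv [|k p] //= n lv' W [<- <-].
- move=> c IH lv [|[|k] p] //= n lv' W; first by case=> <- <-.
  by apply: IH; case: lv W.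
- move=> f IH lv [|k p] //= n lv' W; first by case=> <- <-.
  by apply: IH; case: lv W.
- by move=> lv [|k p] //= n lv' W [<- <-].
- move=> l IHl c IHc lv [|[|j] p] //= n lv'; rewrite geq_max => /andP [Wl Wc].
  + by case=> <- <-; rewrite /= geq_max Wl.
  + exact: IHl.
  + exact: IHc.
- by move=> lv [|k p].
- move=> c IHc f IHf lv [|[|k] p] //= n lv'; rewrite geq_max => /andP [Wc Wf].
  + exact: IHc.
  + exact: IHf.
Qed.

Fixpoint lit_in (l : lit) (c : clause) : Prop :=
  if c is CCons l' c' then l = l' \/ lit_in l c' else False.

Fixpoint clause_in (c : clause) (f : cnf) : Prop :=
  if f is FCons c' f' then c = c' \/ clause_in c f' else False.

Lemma lit_at_nil l lv : lit_at l lv [::] = Some (NLit l, lv).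
Proof. by case: l. Qed.

Lemma clause_at_nil c lv : clause_at c lv [::] = Some (NClause c, lv).
Proof. by case: c. Qed.

Lemma clause_at1 c lv j n lv' : clause_at c lv [:: j] = Some (n, lv') ->
  exists2 l, n = NLit l /\ lv' = lv & lit_in l c.
Proof.
elim: c j => [|l c IH] [|j] //=; first by rewrite lit_at_nil => -[<- <-]; exists l; last left.
by move=> /IH [l' El' Hl']; exists l'; last right.
Qed.

Lemma lit_in_at l c lv : lit_in l c -> exists j, clause_at c lv [:: j] = Some (NLit l, lv).
Proof.
elim: c => [|l' c IH] //= [->|/IH [j Hj]]; last by exists j.+1.
by exists 0; rewrite /= lit_at_nil.
Qed.

Lemma cnf_at1 f lv k n lv' : cnf_at f lv [:: k] = Some (n, lv') ->
  exists2 c, n = NClause c /\ lv' = lv & clause_in c f.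
Proof.
elim: f k => [|c f IH] [|k] //=; first by rewrite clause_at_nil => -[<- <-]; exists c; last left.
by move=> /IH [c' Ec' Hc']; exists c'; last right.
Qed.

Lemma clause_in_at c f lv : clause_in c f -> exists k, cnf_at f lv [:: k] = Some (NClause c, lv).
Proof.
elim: f => [|c' f IH] //= [->|/IH [k Hk]]; last by exists k.+1.
by exists 0; rewrite /= clause_at_nil.
Qed.

Lemma lit_in_md l c : lit_in l c -> md_lit l <= md_clause c.
Proof.
elim: c => [|l' c IH] //= [->|/IH H]; first exact: leq_maxl.
exact: leq_trans H (leq_maxr _ _).
Qed.

Lemma lit_in_vars l c : lit_in l c -> {subset lit_vars l <= clause_vars c}.
Proof.
elim: c => [|l' c IH] //= [-> x Hx|/IH H x /H Hx]; by rewrite mem_cat ?Hx ?orbT.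
Qed.

Lemma clause_has_posP c q : clause_has_pos c q <-> lit_in (LPos q) c.
Proof.
elim: c => [|l c IH] //=; rewrite -IH; split.
- by case/orP=> [|->]; [case: l => // q' /eqP ->; left | right].
- by case=> [<-|->]; rewrite ?eqxx ?orbT.
Qed.

Lemma clause_has_negP c q : clause_has_neg c q <-> lit_in (LNeg q) c.
Proof.
elim: c => [|l c IH] //=; rewrite -IH; split.
- by case/orP=> [|->]; [case: l => // q' /eqP ->; left | right].
- by case=> [<-|->]; rewrite ?eqxx ?orbT.
Qed.

Lemma clauses_wf_in c f : clauses_wf f -> clause_in c f -> clause_nonempty c.
Proof. by elim: f => [|c' f IH] //= /and3P [Hc' _ /IH Hf] [->|]. Qed.

Section Truth.
Variables (W : Type) (R : W -> W -> Prop) (V : nat -> W -> Prop).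

Lemma clause_trueP w c : clause_true R V w c <-> exists2 l, lit_in l c & lit_true R V w l.
Proof.
elim: c => [|l c IH] /=; first by split=> // -[].
rewrite IH; split=> [[H|[l' Hl' H]]|[l' [->|Hl'] H]].
- by exists l; first left.
- by exists l'; first right.
- by left.
- by right; exists l'.
Qed.

Lemma cnf_trueP w f : cnf_true R V w f <-> forall c, clause_in c f -> clause_true R V w c.
Proof.
elim: f => [|c f IH] //=; rewrite IH.
split=> [[Hc Hf] c' [->|/Hf] //|H].
by split=> [|c' Hc']; apply: H; [left|right].
Qed.

End Truth.

(** * Bisimulations and glued models *)

Section Bisimulation.
Variables (W1 : Type) (R1 : W1 -> W1 -> Prop) (V1 : nat -> W1 -> Prop).
Variables (W2 : Type) (R2 : W2 -> W2 -> Prop) (V2 : nat -> W2 -> Prop).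
Variable Z : W1 -> W2 -> Prop.
Hypothesis Zval : forall x y q, Z x y -> (V1 q x <-> V2 q y).
Hypothesis Zforth : forall x y x', Z x y -> R1 x x' -> exists2 y', R2 y y' & Z x' y'.
Hypothesis Zback : forall x y y', Z x y -> R2 y y' -> exists2 x', R1 x x' & Z x' y'.

Lemma bisim_truth :
  (forall l x y, Z x y -> (lit_true R1 V1 x l <-> lit_true R2 V2 y l)) /\
  (forall c x y, Z x y -> (clause_true R1 V1 x c <-> clause_true R2 V2 y c)) /\
  (forall f x y, Z x y -> (cnf_true R1 V1 x f <-> cnf_true R2 V2 y f)).
Proof.
apply: formula_ind => //=.
- by move=> q x y /Zval.
- by move=> q x y /Zval ->.
- move=> c IH x y Zxy; split=> H.
  + by move=> y' /(Zback Zxy) [x' /H Hx' /IH <-].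
  + by move=> x' /(Zforth Zxy) [y' /H Hy' /IH ->].
- move=> f IH x y Zxy; split=> -[].
  + by move=> x' [/(Zforth Zxy) [y' Ry' /IH Z'] /Z' Hy']; exists y'.
  + by move=> y' [/(Zback Zxy) [x' Rx' /IH Z'] /Z' Hx']; exists x'.
- by move=> l IHl c IHc x y Zxy; rewrite (IHl _ _ Zxy) (IHc _ _ Zxy).
- by move=> c IHc f IHf x y Zxy; rewrite (IHc _ _ Zxy) (IHf _ _ Zxy).
Qed.

End Bisimulation.

Record pointed_model := PointedModel {
  pm_world : Type;
  pm_rel : pm_world -> pm_world -> Prop;
  pm_val : nat -> pm_world -> Prop;
  pm_root : pm_world }.
Arguments pm_rel : clear implicits.
Arguments pm_val : clear implicits.

Definition pm_reflexive (M : pointed_model) := forall x, pm_rel M x x.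

Definition pm_clause_true (M : pointed_model) (c : clause) :=
  clause_true (pm_rel M) (pm_val M) (pm_root M) c.

Definition pm_cnf_true (M : pointed_model) (f : cnf) :=
  cnf_true (pm_rel M) (pm_val M) (pm_root M) f.

Lemma sat_reflexiveP f :
  sat_reflexive f <-> exists2 M, pm_reflexive M & pm_cnf_true M f.
Proof.
split=> [[W [R [V [w [HR Hf]]]]]|[[W R V w] HR Hf]]; last by exists W, R, V, w.
by exists (PointedModel R V w).
Qed.

Lemma model_family (I : Type) (P : I -> Prop) (f : I -> cnf) :
  (forall i, P i -> sat_reflexive (f i)) ->
  exists M : I -> pointed_model,
    forall i, pm_reflexive (M i) /\ (P i -> pm_cnf_true (M i) (f i)).
Proof.
move=> Hsat.
have HM i : exists M, pm_reflexive M /\ (P i -> pm_cnf_true M (f i)).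
  have [/Hsat/sat_reflexiveP [M HM Hf]|nP] := classic (P i); first by exists M.
  by exists (PointedModel (fun _ _ : unit => True) (fun _ _ => True) tt).
exists (fun i => proj1_sig (constructive_indefinite_description _ (HM i))) => i.
exact: proj2_sig (constructive_indefinite_description _ (HM i)).
Qed.

(* A fresh root [None] below the roots of the models [M i] with [P i]; it also
   sees itself, so the glued model stays reflexive. *)
Section Glue.
Variables (I : Type) (M : I -> pointed_model) (P : I -> Prop) (V0 : nat -> Prop).

Definition glue_world : Type := option {i : I & pm_world (M i)}.

Definition glue_rel (a b : glue_world) : Prop :=
  match a, b with
  | None, None => True
  | None, Some t => P (projT1 t) /\ projT2 t = pm_root (M (projT1 t))
  | Some _, None => False
  | Some s, Some t => exists E : projT1 s = projT1 t,
      pm_rel (M (projT1 t)) (eq_rect _ (fun i => pm_world (M i)) (projT2 s) _ E)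
        (projT2 t)
  end.

Definition glue_val (q : nat) (a : glue_world) : Prop :=
  if a is Some s then pm_val (M (projT1 s)) q (projT2 s) else V0 q.

Lemma glue_reflexive : (forall i, pm_reflexive (M i)) -> forall a, glue_rel a a.
Proof. by move=> HM [[i x]|] //=; exists erefl; apply: HM. Qed.

Lemma glue_truth i :
  (forall l x, lit_true (pm_rel (M i)) (pm_val (M i)) x l <->
               lit_true glue_rel glue_val (Some (existT _ i x)) l) /\
  (forall c x, clause_true (pm_rel (M i)) (pm_val (M i)) x c <->
               clause_true glue_rel glue_val (Some (existT _ i x)) c) /\
  (forall f x, cnf_true (pm_rel (M i)) (pm_val (M i)) x f <->
               cnf_true glue_rel glue_val (Some (existT _ i x)) f).
Proof.
have [||| Hl [Hc Hf]] := @bisim_truth _ (pm_rel (M i)) (pm_val (M i)) _ glue_rel glue_val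
  (fun x a => a = Some (existT _ i x)).
- by move=> x a q ->.
- by move=> x a x' -> Rx; exists (Some (existT _ i x')); first exists erefl.
- by move=> x a [[j y]|] -> //= [E]; case: j / E y => y Rx; exists y.
- by split=> [l x|]; [apply: Hl | split=> [c x|f x]; [apply: Hc | apply: Hf]].
Qed.

Lemma glue_box_root c :
  clause_true glue_rel glue_val None c ->
  (forall i, P i -> pm_clause_true (M i) c) ->
  lit_true glue_rel glue_val None (LBox c).
Proof.
by move=> Hc HM [[i x] /= [Pi ->]|//]; apply/(glue_truth i).2.1; apply: HM.
Qed.

Lemma glue_dia_root i f : P i -> pm_cnf_true (M i) f ->
  lit_true glue_rel glue_val None (LDia f).
Proof.
move=> Pi Hf; exists (Some (existT _ i (pm_root (M i)))); split=> //.
exact/(glue_truth i).2.2.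
Qed.

End Glue.
Arguments glue_rel {I} M P a b.
Arguments glue_val {I} M V0 q a.

(** * The formulas zeta_i *)

Definition mso_imp a b := MOr (MNot a) b.

(* Set variables: 0 is the free variable X, 1 the guessed set D of clauses true
   at the current world, 2 the guessed set T of elements true there. *)
Definition zeta_cover := MAll1 0 (mso_imp (MIn 0 0) (MIn 0 1)).
Definition zeta_clauses := MAll1 0 (mso_imp (MIn 0 1) (MAnd (MCl 0)
  (MOr (MEx1 1 (MAnd (MOc 0 1) (MIn 1 2))) (MEx1 1 (MAnd (MOcb 0 1) (MNot (MIn 1 2))))))).
Definition zeta_boxes := MAll1 0 (MAll1 1 (mso_imp (MIn 0 1) (mso_imp (MOc 0 1)
  (mso_imp (MIn 1 2) (mso_imp (MB 1) (MEx1 2 (MAnd (MOc 1 2) (MIn 2 1)))))))).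
Definition zeta_no_dia := MAll1 0 (MAll1 1 (MNot (MAnd (MIn 0 1) (MAnd (MOc 0 1)
  (MAnd (MIn 1 2) (MD 1)))))).
Definition zeta_succ_mem := MOr (MOc 1 2) (MEx1 3 (MEx1 0 (MAnd (MIn 0 1)
  (MAnd (MOc 0 3) (MAnd (MIn 3 2) (MAnd (MB 3) (MOc 3 2))))))).
Definition zeta_succ_def :=
  MAll1 2 (MAnd (mso_imp (MIn 2 0) zeta_succ_mem) (mso_imp zeta_succ_mem (MIn 2 0))).
Definition zeta_dia z := MAll1 0 (MAll1 1 (mso_imp (MIn 0 1) (mso_imp (MOc 0 1)
  (mso_imp (MIn 1 2) (mso_imp (MD 1) (MAll2 0 (mso_imp zeta_succ_def z))))))).
Definition zeta_guess dia :=
  MEx2 1 (MEx2 2 (MAnd zeta_cover (MAnd zeta_clauses (MAnd zeta_boxes dia)))).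

Fixpoint zeta (i : nat) : mso :=
  if i is i'.+1 then zeta_guess (zeta_dia (zeta i')) else zeta_guess zeta_no_dia.

Lemma mso_len_zeta i : mso_len (zeta i) = 54 + 95 * i.
Proof. by elim: i => [|i IH] //=; rewrite IH mulnS addnCA. Qed.

Lemma zeta_closed i : one_free_setvar (zeta i).
Proof.
suff /eqP fv2_zeta : [seq X <- fv2 (zeta i) | X != 0] == [::].
  split; first by elim: i {fv2_zeta} => //= i ->.
  move=> X XinZ; rewrite inE; apply: contraT => X0.
  have : X \in [seq X <- fv2 (zeta i) | X != 0] by rewrite mem_filter X0.
  by rewrite fv2_zeta.
by elim: i => //= i /eqP ->.
Qed.

Section ZetaSemantics.
Variable A : rstruct.
Local Notation T := (rdom A).

Definition locally_consistent (X D Tr : {set T}) :=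
  [/\ {subset X <= D},
      (forall x, x \in D -> rCl x /\
         ((exists2 y, rOc x y & y \in Tr) \/ (exists2 y, rOcb x y & y \notin Tr))) &
      (forall x y, x \in D -> rOc x y -> y \in Tr -> rB y ->
         exists2 z, rOc y z & z \in D)].

Definition succ_clauses (D Tr : {set T}) (d : T) (Y : {set T}) :=
  forall z, z \in Y <->
    rOc d z \/ exists b e, e \in D /\ rOc e b /\ b \in Tr /\ rB b /\ rOc b z.

Fixpoint zeta_sem (i : nat) (X : {set T}) : Prop :=
  exists D Tr, locally_consistent X D Tr /\
  if i is i'.+1 then
    forall x y, x \in D -> rOc x y -> y \in Tr -> rD y ->
      forall Y, succ_clauses D Tr y Y -> zeta_sem i' Y
  else forall x y, x \in D -> rOc x y -> y \in Tr -> ~ rD y.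

Local Notation eval := (@mso_eval A).

Lemma eval_cover e1 e2 : eval e1 e2 zeta_cover <-> {subset e2 0 <= e2 1}.
Proof. by split=> H x; [exact: or_to_imply (H x) | exact: imply_to_or (H x)]. Qed.

Lemma eval_clauses e1 e2 : eval e1 e2 zeta_clauses <->
  (forall x, x \in e2 1 -> rCl x /\
     ((exists2 y, rOc x y & y \in e2 2) \/ (exists2 y, rOcb x y & y \notin e2 2))).
Proof.
rewrite /= /upd /at1 /at2 /=; split=> H x.
- move=> /(or_to_imply _ _ (H x)) [Cx [[y [Oxy Ty]]|[y [Oxy /negP nTy]]]].
  + by split=> //; left; exists y.
  + by split=> //; right; exists y.
- apply/imply_to_or => /H [Cx [[y Oxy Ty]|[y Oxy /negP nTy]]].
  + by split=> //; left; exists y.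
  + by split=> //; right; exists y.
Qed.

Lemma eval_boxes e1 e2 : eval e1 e2 zeta_boxes <->
  (forall x y, x \in e2 1 -> rOc x y -> y \in e2 2 -> rB y ->
     exists2 z, rOc y z & z \in e2 1).
Proof.
rewrite /= /upd /at1 /at2 /=; split=> H x y.
- move=> Dx Oxy Ty By.
  have := or_to_imply _ _ (or_to_imply _ _ (H x y) Dx) Oxy.
  by move=> /or_to_imply/(_ Ty)/or_to_imply/(_ By) [z [Oyz Dz]]; exists z.
- apply/imply_to_or => Dx; apply/imply_to_or => Oxy.
  apply/imply_to_or => Ty; apply/imply_to_or => By.
  by have [z Oyz Dz] := H x y Dx Oxy Ty By; exists z.
Qed.

Lemma eval_no_dia e1 e2 : eval e1 e2 zeta_no_dia <->
  (forall x y, x \in e2 1 -> rOc x y -> y \in e2 2 -> ~ rD y).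
Proof.
rewrite /= /upd /at1 /at2 /=; split=> H x y.
- by move=> Dx Oxy Ty Dy; apply: (H x y).
- by move=> [Dx [Oxy [Ty /(H x y Dx Oxy Ty)]]].
Qed.

Lemma eval_succ_def e1 e2 d : e1 1 = Some d ->
  eval e1 e2 zeta_succ_def <-> succ_clauses (e2 1) (e2 2) d (e2 0).
Proof.
move=> e1d; rewrite /= /upd /at1 /at2 /= e1d; split=> H z; have [H1 H2] := H z.
- by split; [exact: or_to_imply H1 | exact: or_to_imply H2].
- by split; [exact: imply_to_or H1 | exact: imply_to_or H2].
Qed.

Lemma eval_guess dia e1 e2 : eval e1 e2 (zeta_guess dia) <->
  exists D Tr, locally_consistent (e2 0) D Tr /\ eval e1 (upd (upd e2 1 D) 2 Tr) dia.
Proof.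
split=> [[D [Tr [/eval_cover H1 [/eval_clauses H2 [/eval_boxes H3 H4]]]]]|].
  by exists D, Tr.
move=> [D [Tr [[H1 H2 H3] H4]]]; exists D, Tr.
by split; [apply/eval_cover | split; [apply/eval_clauses | split; [apply/eval_boxes|]]].
Qed.

Lemma eval_dia z e1 e2 : eval e1 e2 (zeta_dia z) <->
  (forall x y, x \in e2 1 -> rOc x y -> y \in e2 2 -> rD y ->
     forall Y, succ_clauses (e2 1) (e2 2) y Y ->
     eval (upd (upd e1 0 (Some x)) 1 (Some y)) (upd e2 0 Y) z).
Proof.
split=> H x y.
- move=> Dx Oxy Ty Dy Y HY; have := or_to_imply _ _ (H x y) Dx.
  move=> /or_to_imply/(_ Oxy)/or_to_imply/(_ Ty)/or_to_imply/(_ Dy)/(_ Y).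
  by move=> /or_to_imply; apply; apply/eval_succ_def.
- apply: imply_to_or => Dx; apply: imply_to_or => Oxy.
  apply: imply_to_or => Ty; apply: imply_to_or => Dy Y.
  apply: imply_to_or => /eval_succ_def Hsucc; apply: (H x y Dx Oxy Ty Dy Y).
  exact: Hsucc.
Qed.

Lemma eval_zeta i e1 e2 : eval e1 e2 (zeta i) <-> zeta_sem i (e2 0).
Proof.
elim: i e1 e2 => [|i IH] e1 e2; rewrite eval_guess.
- split=> -[D [Tr [HX H]]]; exists D, Tr; split=> //.
  + exact: (eval_no_dia _ (upd (upd e2 1 D) 2 Tr)).1 H.
  + exact: (eval_no_dia _ (upd (upd e2 1 D) 2 Tr)).2 H.
- split=> -[D [Tr [HX H]]]; exists D, Tr; split=> //.
  + move=> x y Dx Oxy Ty Dy Y HY.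
    by move: ((eval_dia _ _ (upd (upd e2 1 D) 2 Tr)).1 H x y Dx Oxy Ty Dy Y HY) => /IH.
  + apply/(eval_dia _ _ (upd (upd e2 1 D) 2 Tr)) => x y Dx Oxy Ty Dy Y HY.
    exact/IH/(H x y).
Qed.

End ZetaSemantics.

Definition modal_lit (l : lit) : bool :=
  match l with LBox _ | LDia _ => true | _ => false end.

Section StructureS.
Variable phi : cnf.
Local Notation S := (Sdom phi).
Local Notation nd x := (node_of phi (val x)).
Local Notation Oc x y := (isOc phi (val x) (val y)).
Local Notation Ocb x y := (isOcb phi (val x) (val y)).

Lemma mem_S_inl p : ((inl p : elem) \in S_list phi) =
  (p \in cnf_paths phi) && is_elem_node (node_at phi p).
Proof.
rewrite mem_cat orbC; case: mapP => [[? _ //]|_] /=.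
by rewrite mem_map ?mem_filter 1?andbC //; move=> ? ? [].
Qed.

Lemma mem_S_inr q : ((inr q : elem) \in S_list phi) = (q \in cnf_vars phi).
Proof.
rewrite mem_cat; case: mapP => [[? _ //]|_] /=.
by rewrite mem_map ?mem_undup //; move=> ? ? [].
Qed.

Lemma node_at_nil : node_at phi [::] = None.
Proof. by rewrite /node_at; case: phi. Qed.

Lemma node_elem p n lv : node_at phi p = Some (n, lv) -> is_elem_node (Some (n, lv)) ->
  exists x : S, val x = inl p.
Proof.
move=> Hp Hn; have Hpath : p \in cnf_paths phi.
  by apply: (lookup_paths.2.2 phi (md_cnf phi)); rewrite -/(node_at phi p) Hp.
have Hx : (inl p : elem) \in S_list phi by rewrite mem_S_inl Hpath Hp.
by exists (SeqSub Hx).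
Qed.

Lemma var_elem q : q \in cnf_vars phi -> exists x : S, val x = inr q.
Proof. by rewrite -mem_S_inr => Hq; exists (SeqSub Hq). Qed.

Lemma node_of_inl (x : S) p : val x = inl p -> exists n lv, nd x = Some (n, lv).
Proof.
move=> Ex; have := valP x; rewrite Ex mem_S_inl => /andP [_].
rewrite /=; case: (node_at phi p) => [[n lv] _|//]; by exists n, lv.
Qed.

Lemma node_of_elem (x : S) n lv : nd x = Some (n, lv) -> is_elem_node (Some (n, lv)).
Proof.
case Ex: (val x) => [p|//] /= Hp.
by have := valP x; rewrite Ex mem_S_inl Hp => /andP [].
Qed.

Lemma node_of_lit (x : S) l lv : nd x = Some (NLit l, lv) -> modal_lit l.
Proof. by move=> /node_of_elem; case: l. Qed.

Lemma node_of_md (x : S) n lv : nd x = Some (n, lv) -> node_md n <= lv.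
Proof. by case: (val x) => // p; apply: (lookup_md.2.2 phi). Qed.

Lemma node_of_wf (x : S) n lv : wf_cnf phi -> nd x = Some (n, lv) -> node_wf n.
Proof. by case: (val x) => // p /andP [_]; apply: (lookup_wf.2.2 phi). Qed.

Lemma node_of_vars (x : S) n lv : nd x = Some (n, lv) ->
  {subset node_vars n <= cnf_vars phi}.
Proof. by case: (val x) => // p; apply: (lookup_vars.2.2 phi). Qed.

Lemma node_at_rcons p k n lv : node_at phi p = Some (n, lv) ->
  node_at phi (rcons p k) = node_lookup n lv [:: k].
Proof.
move=> Hp; rewrite -cats1 /node_at lookup_cat.2.2 -/(node_at phi p) ?Hp //.
by apply/eqP => p0; rewrite p0 node_at_nil in Hp.
Qed.

Lemma node_at_child p p' n lv : node_at phi p = Some (n, lv) -> child p p' ->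
  exists k, node_at phi p' = node_lookup n lv [:: k].
Proof.
move=> Hp /andP [/eqP size_p' /eqP take_p'].
have : size (drop (size p) p') = 1 by rewrite size_drop size_p' subSnn.
case E: (drop (size p) p') => [|k [|]] // _; exists k.
by rewrite -(cat_take_drop (size p) p') take_p' E cats1 (node_at_rcons _ Hp).
Qed.

Lemma child_rcons p k : child p (rcons p k).
Proof. by rewrite /child size_rcons eqxx -cats1 take_cat ltnn subnn take0 cats0 /=. Qed.

Lemma Oc_child (y z : S) n lv : nd y = Some (n, lv) -> Oc y z -> (exists p, val z = inl p) ->
  exists k n' lv', nd z = Some (n', lv') /\ node_lookup n lv [:: k] = Some (n', lv').
Proof.
case: (val y) => [p|//] /= Hp; case Ez: (val z) => [p'|q] /=; last by move=> _ [].
case/andP=> /(node_at_child Hp) [k Hk] _ _; have [n' [lv' Hz]] := node_of_inl Ez.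
by exists k, n', lv'; rewrite -Hk; move: Hz; rewrite Ez.
Qed.

Lemma Oc_clause (x y : S) c lv : nd x = Some (NClause c, lv) -> Oc x y ->
  (exists2 q, val y = inr q & clause_has_pos c q) \/
  (exists2 l, nd y = Some (NLit l, lv) & lit_in l c).
Proof.
move=> Hx Oxy; case Ey: (val y) => [p|q].
- have [k [n [lv' [Hy /clause_at1 [l [En Elv] Hl]]]]] := Oc_child Hx Oxy (ex_intro _ p Ey).
  by right; exists l; rewrite // -Ey Hy En Elv.
- by left; exists q => //; move: Oxy; rewrite Ey; case: (val x) Hx => [p|//] /= ->.
Qed.

Lemma Oc_clause_box (x y : S) c lv : nd x = Some (NClause c, lv) -> Oc x y ->
  isB phi (val y) -> exists c', nd y = Some (NLit (LBox c'), lv).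
Proof.
move=> Hx /(Oc_clause Hx) [[q -> _]|[l Hy _]] //.
by rewrite /isB Hy; case: l Hy => // c' Hy _; exists c'.
Qed.

Lemma Oc_clause_dia (x y : S) c lv : nd x = Some (NClause c, lv) -> Oc x y ->
  isD phi (val y) -> exists f, nd y = Some (NLit (LDia f), lv).
Proof.
move=> Hx /(Oc_clause Hx) [[q -> _]|[l Hy _]] //.
by rewrite /isD Hy; case: l Hy => // f Hy _; exists f.
Qed.

Lemma Ocb_clause (x y : S) c lv : nd x = Some (NClause c, lv) -> Ocb x y ->
  exists2 q, val y = inr q & clause_has_neg c q.
Proof.
by case: (val x) => [p|//] /= Hp; case: (val y) => [//|q] /=; rewrite Hp; exists q.
Qed.

Lemma Oc_lit_inl (y z : S) l lv : nd y = Some (NLit l, lv) -> Oc y z ->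
  exists p, val z = inl p.
Proof.
case: (val y) => [p|//] /= Hp; case: (val z) => [p'|q] /=; first by exists p'.
by rewrite Hp.
Qed.

Lemma Oc_box (y z : S) c lv : nd y = Some (NLit (LBox c), lv) -> Oc y z ->
  nd z = Some (NClause c, lv.-1).
Proof.
move=> Hy Oyz; have [[|k] [n [lv' [-> //=]]]] := Oc_child Hy Oyz (Oc_lit_inl Hy Oyz).
by rewrite clause_at_nil.
Qed.

Lemma Oc_dia (y z : S) f lv : nd y = Some (NLit (LDia f), lv) -> Oc y z ->
  exists2 c, nd z = Some (NClause c, lv.-1) & clause_in c f.
Proof.
move=> Hy Oyz; have [k [n [lv' [-> /cnf_at1 [c [En Elv] Hc]]]]] :=
  Oc_child Hy Oyz (Oc_lit_inl Hy Oyz).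
by exists c; rewrite // En Elv.
Qed.

Lemma clause_Oc_pos (x : S) c lv q : nd x = Some (NClause c, lv) ->
  clause_has_pos c q -> exists2 y : S, Oc x y & val y = inr q.
Proof.
move=> Hx Hq; have /clause_has_posP/lit_in_vars/(_ q (mem_head _ _)) Hv := Hq.
have [y Ey] := var_elem (node_of_vars Hx Hv).
by exists y; rewrite // Ey; case: (val x) Hx => [p|//] /= ->.
Qed.

Lemma clause_Ocb_neg (x : S) c lv q : nd x = Some (NClause c, lv) ->
  clause_has_neg c q -> exists2 y : S, Ocb x y & val y = inr q.
Proof.
move=> Hx Hq; have /clause_has_negP/lit_in_vars/(_ q (mem_head _ _)) Hv := Hq.
have [y Ey] := var_elem (node_of_vars Hx Hv).
by exists y; rewrite // Ey; case: (val x) Hx => [p|//] /= ->.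
Qed.

Lemma node_Oc (x : S) n lv k n' lv' : nd x = Some (n, lv) ->
  node_lookup n lv [:: k] = Some (n', lv') -> is_elem_node (Some (n', lv')) ->
  exists2 y : S, Oc x y & nd y = Some (n', lv').
Proof.
case Ex: (val x) => [p|//] /= Hp Hk Hn'.
have Hpk := node_at_rcons k Hp; rewrite Hk in Hpk.
have [y Ey] := node_elem Hpk Hn'; exists y; last by rewrite Ey.
rewrite Ey /= child_rcons /isCl /isLt /isB /isD /= Hp Hpk.
case: n Hp Hk => [c|[q|q|c|f]] Hp //=.
- by move=> /clause_at1 [l [En _] _]; subst n'; case: l {Hpk} Hn'.
- by case: k {Ey Hpk} => //; rewrite clause_at_nil => -[<- _].
- by move=> /cnf_at1 [c [-> _] _].
Qed.

Lemma clause_Oc_lit (x : S) c lv l : nd x = Some (NClause c, lv) -> lit_in l c ->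
  modal_lit l -> exists2 y : S, Oc x y & nd y = Some (NLit l, lv).
Proof. by move=> Hx /(lit_in_at lv) [j Hj] Hl; apply: (node_Oc Hx Hj); case: l {Hj} Hl. Qed.

Lemma box_Oc (y : S) c lv : nd y = Some (NLit (LBox c), lv) -> clause_nonempty c ->
  exists2 z : S, Oc y z & nd z = Some (NClause c, lv.-1).
Proof.
by move=> Hy Hc; apply: (node_Oc (k := 0) Hy); rewrite /= ?clause_at_nil //; case: c Hc.
Qed.

Lemma dia_Oc (y : S) f lv c : wf_cnf phi -> nd y = Some (NLit (LDia f), lv) ->
  clause_in c f -> exists2 z : S, Oc y z & nd z = Some (NClause c, lv.-1).
Proof.
move=> wf_phi Hy Hc; have /andP [_ /clauses_wf_in /(_ Hc)] := node_of_wf wf_phi Hy.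
by have [k Hk] := clause_in_at lv.-1 Hc; apply: (node_Oc Hy Hk); case: c {Hc Hk}.
Qed.

Lemma isCl_node (x : S) : isCl phi (val x) -> exists c lv, nd x = Some (NClause c, lv).
Proof. by rewrite /isCl; case: (nd x) => // -[[c|//] lv] _; exists c, lv. Qed.

Lemma clause_of_node (x : S) c lv : nd x = Some (NClause c, lv) -> clause_of phi (val x) = c.
Proof. by rewrite /clause_of => ->. Qed.

Lemma CNF_of_true (W : Type) (R : W -> W -> Prop) V w (C : {set S}) :
  cnf_true R V w (CNF_of C) <-> forall x, x \in C -> clause_true R V w (clause_of phi (val x)).
Proof.
suff -> : forall s : seq S,
    cnf_true R V w (foldr FCons FNil [seq clause_of phi (val e) | e <- s]) <->
    forall x, x \in s -> clause_true R V w (clause_of phi (val x)).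
  by split=> H x Hx; apply: H; rewrite ?mem_enum in Hx *.
elim=> [|a s IH] //=; rewrite IH; split=> [[Ha Hs] x|H].
- by rewrite inE => /predU1P [->|/Hs].
- by split=> [|x Hx]; apply: H; rewrite inE ?eqxx ?Hx ?orbT.
Qed.

End StructureS.

Definition asbool (P : Prop) : bool := if excluded_middle_informative P then true else false.

Lemma asboolP (P : Prop) : reflect P (asbool P).
Proof. by rewrite /asbool; case: excluded_middle_informative => H; constructor. Qed.

(** * Completeness *)

Section Completeness.
Variable phi : cnf.
Hypothesis wf_phi : wf_cnf phi.
Local Notation S := (Sdom phi).
Local Notation A := (Sstruct phi).
Local Notation nd x := (node_of phi (val x)).
Local Notation Oc x y := (isOc phi (val x) (val y)).

Definition dia_witness (D Tr : {set S}) (d : S) :=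
  exists2 x, x \in D & [/\ Oc x d, d \in Tr & isD phi (val d)].

Definition succ_set (D Tr : {set S}) (d : S) : {set S} :=
  [set z | asbool (Oc d z \/ exists b e,
             e \in D /\ Oc e b /\ b \in Tr /\ isB phi (val b) /\ Oc b z)].

Lemma succ_setP D Tr d : succ_clauses (A := A) D Tr d (succ_set D Tr d).
Proof. by move=> z; rewrite inE; split=> /asboolP. Qed.

Definition var_val (Tr : {set S}) (q : nat) := exists2 x : S, x \in Tr & val x = inr q.

Section GluedRoot.
Variables (X D Tr : {set S}) (M : S -> pointed_model).
Hypothesis consistent : locally_consistent (A := A) X D Tr.
Hypothesis M_succ :
  forall d, dia_witness D Tr d -> pm_cnf_true (M d) (CNF_of (succ_set D Tr d)).
Local Notation R := (glue_rel M (dia_witness D Tr)).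
Local Notation V := (glue_val M (var_val Tr)).

Lemma succ_clause_true d z : dia_witness D Tr d -> z \in succ_set D Tr d ->
  pm_clause_true (M d) (clause_of phi (val z)).
Proof. by move=> /M_succ /CNF_of_true; apply. Qed.

Lemma root_box x y c lv : x \in D -> Oc x y -> y \in Tr -> nd y = Some (NLit (LBox c), lv) ->
  (forall z, z \in D -> md_clause (clause_of phi (val z)) < md_lit (LBox c) ->
     clause_true R V None (clause_of phi (val z))) ->
  lit_true R V None (LBox c).
Proof.
have [_ _ D_box] := consistent.
move=> Dx Oxy Ty Hy IH; have By : isB phi (val y) by rewrite /isB Hy.
have [z Oyz Dz] := D_box x y Dx Oxy Ty By.
have Ecz : clause_of phi (val z) = c by apply: clause_of_node (Oc_box Hy Oyz).
apply: glue_box_root => [|d Hd]; rewrite -Ecz; first by apply: IH; rewrite // Ecz.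
by apply: succ_clause_true; rewrite // inE; apply/asboolP; right; exists y, x.
Qed.

Lemma root_dia x y f lv : x \in D -> Oc x y -> y \in Tr -> nd y = Some (NLit (LDia f), lv) ->
  lit_true R V None (LDia f).
Proof.
move=> Dx Oxy Ty Hy; have Hd : dia_witness D Tr y by exists x; rewrite // /isD Hy.
apply: (glue_dia_root (P := dia_witness D Tr) _ Hd); apply/cnf_trueP => c /(dia_Oc wf_phi Hy) [z Oyz Hz].
rewrite -(clause_of_node Hz); apply: succ_clause_true => //.
by rewrite inE; apply/asboolP; left.
Qed.

Lemma root_clause_step x : x \in D ->
  (forall z, z \in D -> md_clause (clause_of phi (val z)) < md_clause (clause_of phi (val x)) ->
     clause_true R V None (clause_of phi (val z))) ->
  clause_true R V None (clause_of phi (val x)).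
Proof.
have [_ D_clauses _] := consistent.
move=> Dx IH; have [/isCl_node [c [lv Hx]] Hchild] := D_clauses x Dx.
rewrite (clause_of_node Hx) in IH *; apply/clause_trueP.
case: Hchild => [[y Oxy Ty]|[y Oxy nTy]].
- case: (Oc_clause Hx Oxy) => [[q Ey /clause_has_posP Hq]|[l Hy Hl]].
    by exists (LPos q) => //; exists y.
  exists l => //; have := node_of_lit Hy; case: l Hy Hl => // [c'|f] Hy Hl _.
    apply: (root_box Dx Oxy Ty Hy) => z Dz lt_z.
    exact: IH Dz (leq_trans lt_z (lit_in_md Hl)).
  exact: root_dia Dx Oxy Ty Hy.
- have [q Ey /clause_has_negP Hq] := Ocb_clause Hx Oxy.
  exists (LNeg q) => // -[y' Ty' Ey'].
  have /val_inj Ey'y : val y' = val y by rewrite Ey Ey'.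
  by move: nTy; rewrite -Ey'y Ty'.
Qed.

Lemma root_clause x : x \in D -> clause_true R V None (clause_of phi (val x)).
Proof.
move: {2}(md_clause _).+1 (ltnSn (md_clause (clause_of phi (val x)))) => n.
elim: n x => [//|n IHn] x lt_x Dx; apply: root_clause_step => // z Dz lt_z.
exact: IHn (leq_trans lt_z lt_x) Dz.
Qed.

End GluedRoot.

Lemma glue_sat X D Tr : locally_consistent (A := A) X D Tr ->
  (forall d, dia_witness D Tr d -> sat_reflexive (CNF_of (succ_set D Tr d))) ->
  sat_reflexive (CNF_of X).
Proof.
move=> consistent /model_family [M HM]; apply/sat_reflexiveP.
exists (PointedModel (glue_rel M (dia_witness D Tr)) (glue_val M (var_val Tr)) None).
  exact: glue_reflexive (fun d => (HM d).1).
have [sub_XD _ _] := consistent.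
apply/CNF_of_true => x /sub_XD.
exact: (root_clause consistent (fun d => (HM d).2)).
Qed.

Lemma completeness i X : zeta_sem (A := A) i X -> sat_reflexive (CNF_of X).
Proof.
elim: i X => [|i IH] X [D [Tr [consistent Hdia]]]; apply: (glue_sat consistent).
- by move=> d [x Dx [Oxd Td Dd]]; case: (Hdia x d Dx Oxd Td Dd).
- by move=> d [x Dx [Oxd Td Dd]]; apply/IH/(Hdia x d Dx Oxd Td Dd)/succ_setP.
Qed.

End Completeness.

(** * Soundness *)

Section Soundness.
Variable phi : cnf.
Local Notation S := (Sdom phi).
Local Notation A := (Sstruct phi).
Local Notation nd x := (node_of phi (val x)).
Local Notation Oc x y := (isOc phi (val x) (val y)).

Definition clauses_upto (i : nat) (X : {set S}) :=
  forall x, x \in X -> isCl phi (val x) /\ exists j, j <= i /\ isLv phi j (val x).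

Section TruthSets.
Variables (W : Type) (R : W -> W -> Prop) (V : nat -> W -> Prop) (w : W).
Hypothesis R_refl : forall v, R v v.

Definition elem_true (x : S) : Prop :=
  match nd x with
  | Some (NClause c, _) => clause_true R V w c
  | Some (NLit l, _) => lit_true R V w l
  | None => if val x is inr q then V q w else False
  end.

Definition elem_level (x : S) := if nd x is Some (_, lv) then lv else 0.

Definition true_clauses (i : nat) : {set S} :=
  [set x | [&& isCl phi (val x), elem_level x <= i & asbool (elem_true x)]].

Definition true_elems : {set S} := [set x | asbool (elem_true x)].

Lemma true_clausesP i x : reflect
  (exists c lv, [/\ nd x = Some (NClause c, lv), lv <= i & clause_true R V w c])
  (x \in true_clauses i).
Proof.
rewrite inE /isCl /elem_level /elem_true; apply: (iffP idP).
  by case: (nd x) => // -[[c|//] lv] /= /andP [lv_i /asboolP]; exists c, lv.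
by move=> [c [lv [-> lv_i /asboolP Hc]]]; rewrite lv_i.
Qed.

Lemma true_elems_lit y l lv : nd y = Some (NLit l, lv) ->
  (y \in true_elems) = asbool (lit_true R V w l).
Proof. by rewrite inE /elem_true => ->. Qed.

Lemma true_elems_var y q : val y = inr q -> (y \in true_elems) = asbool (V q w).
Proof. by rewrite inE /elem_true => ->. Qed.

Lemma true_sets_consistent i X : clauses_upto i X -> cnf_true R V w (CNF_of X) ->
  locally_consistent (A := A) X (true_clauses i) true_elems.
Proof.
move=> HX /CNF_of_true HXw; split.
- move=> x Xx; have [/isCl_node [c [lv Hx]] [j [j_i lv_j]]] := HX x Xx.
  apply/true_clausesP; exists c, lv; split=> //; last by rewrite -(clause_of_node Hx); apply: HXw.
  by move: lv_j; rewrite /isLv Hx => /eqP ->.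
- move=> x /true_clausesP [c [lv [Hx _ /clause_trueP [l Hl Hlw]]]].
  split; first by rewrite /= /isCl Hx.
  case: l Hl Hlw => [q|q|c'|f] Hl Hlw.
  + have [y Oxy Ey] := clause_Oc_pos Hx ((clause_has_posP _ _).2 Hl).
    by left; exists y; rewrite // (true_elems_var Ey); apply/asboolP.
  + have [y Oxy Ey] := clause_Ocb_neg Hx ((clause_has_negP _ _).2 Hl).
    by right; exists y; rewrite // (true_elems_var Ey); apply/asboolP.
  + have [y Oxy Hy] := clause_Oc_lit Hx Hl erefl.
    by left; exists y; rewrite // (true_elems_lit Hy); apply/asboolP.
  + have [y Oxy Hy] := clause_Oc_lit Hx Hl erefl.
    by left; exists y; rewrite // (true_elems_lit Hy); apply/asboolP.
- move=> x y /true_clausesP [c [lv [Hx lv_i _]]] Oxy Ty By.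
  have [c' Hy] := Oc_clause_box Hx Oxy By.
  move: Ty; rewrite (true_elems_lit Hy) => /asboolP Hbox.
  have Hc' := Hbox w (R_refl w).
  have c'_nonempty : clause_nonempty c' by case: c' {Hy Hbox} Hc'.
  have [z Oyz Hz] := box_Oc Hy c'_nonempty.
  exists z => //; apply/true_clausesP; exists c', lv.-1; split=> //.
  exact: leq_trans (leq_pred lv) lv_i.
Qed.

Lemma succ_clauses_true i y f lv v Y : nd y = Some (NLit (LDia f), lv) -> lv <= i.+1 ->
  R w v -> cnf_true R V v f ->
  succ_clauses (A := A) (true_clauses i.+1) true_elems y Y ->
  forall z, z \in Y ->
    exists c lv', [/\ nd z = Some (NClause c, lv'), lv' <= i & clause_true R V v c].
Proof.
move=> Hy lv_i Rwv /cnf_trueP Hfv HY z /HY [Oyz|[b [e [De [Oeb [Tb [Bb Obz]]]]]]].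
  have [c Hz Hc] := Oc_dia Hy Oyz.
  by exists c, lv.-1; split=> //; [case: lv lv_i {Hy Hz} | apply: Hfv].
have [ce [lve [He lve_i _]]] := true_clausesP _ _ De.
have [c' Hb] := Oc_clause_box He Oeb Bb.
move: Tb; rewrite (true_elems_lit Hb) => /asboolP Hbox.
by exists c', lve.-1; split; [apply: Oc_box Hb Obz | case: lve lve_i {He Hb} | apply: Hbox].
Qed.

Lemma true_dia_child k x y : x \in true_clauses k -> Oc x y -> y \in true_elems ->
  isD phi (val y) -> exists f lv,
    [/\ nd y = Some (NLit (LDia f), lv), lv <= k & lit_true R V w (LDia f)].
Proof.
move=> /true_clausesP [c [lv [Hx lv_k _]]] Oxy Ty Dy.
have [f Hy] := Oc_clause_dia Hx Oxy Dy.
by move: Ty; rewrite (true_elems_lit Hy) => /asboolP Hf; exists f, lv.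
Qed.

End TruthSets.

Lemma soundness i X : clauses_upto i X -> sat_reflexive (CNF_of X) -> zeta_sem (A := A) i X.
Proof.
elim: i X => [|i IH] X HX /sat_reflexiveP [[W R V w] /= R_refl HXw].
- exists (true_clauses R V w 0), (true_elems R V w).
  split=> [|x y Dx Oxy Ty Dy]; first exact: true_sets_consistent.
  have [f [lv [Hy lv0 _]]] := true_dia_child Dx Oxy Ty Dy.
  by have := node_of_md Hy; rewrite leqn0 in lv0; rewrite (eqP lv0).
- exists (true_clauses R V w i.+1), (true_elems R V w).
  split=> [|x y Dx Oxy Ty Dy Y HY]; first exact: true_sets_consistent.
  have [f [lv [Hy lv_i [v [Rwv Hfv]]]]] := true_dia_child Dx Oxy Ty Dy.
  have HYv := succ_clauses_true Hy lv_i Rwv Hfv HY.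
  apply: IH => [z /HYv [c [lv' [Hz lv'_i _]]]|].
    by split; [rewrite /= /isCl Hz | exists lv'; rewrite /isLv Hz].
  apply/sat_reflexiveP; exists (PointedModel R V v) => //.
  by apply/CNF_of_true => z /HYv [c [lv' [Hz _ Hc]]]; rewrite (clause_of_node Hz).
Qed.

End Soundness.

Theorem mainTheorem5 :
  exists c : nat, forall i : nat, exists zeta : mso,
    one_free_setvar zeta /\ mso_len zeta <= c * i.+1 /\
    forall phi : cnf, wf_cnf phi ->
    forall C : {set rdom (Sstruct phi)},
      (forall e, e \in C ->
         @rCl (Sstruct phi) e /\ exists j, j <= i /\ @rLv (Sstruct phi) j e) ->
      (sat_reflexive (CNF_of C) <-> @models1 (Sstruct phi) zeta C).
Proof.
exists 95 => i; exists (zeta i); split; first exact: zeta_closed.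
split; first by rewrite mso_len_zeta mulnS leq_add2r.
move=> phi wf_phi C HC; rewrite /models1 eval_zeta /=.
by split; [apply: soundness | apply: completeness].
Qed.
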